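(* Let $s\ge1$ and let $\vec M=(M_1,\dots,M_n)$ be positive integers with $2M_i+1\equiv0\pmod{p^s}$ for all $i$. Then for all positive integers $l$ and $t$ with $t\le s$, the vector $I^{[lp^t-1]}(z,\vec M)\in\mathbb Z[z]^n$ is a solution of the KZ system modulo $p^t$.
   Context: Let $p$ be an odd prime, $g\ge1$, $n=2g+1$, with $p>n$. Write $z=(z_1,\dots,z_n)$. For $1\le i\ne j\le n$ let $\Omega_{ij}$ be the $n\times n$ matrix whose $(i,i)$ and $(j,j)$ entries are $-1$, whose $(i,j)$ and $(j,i)$ entries are $1$, and all of whose other entries are $0$. The KZ system is the system for a column vector $I=(I_1,\dots,I_n)$ of functions of $z$: $\frac{\partial I}{\partial z_i}=\frac12\sum_{j\ne i}\frac{\Omega_{ij}}{z_i-z_j}\,I$ for $i=1,\dots,n$, together with $I_1+\dots+I_n=0$. For a positive integer $s$ let $\pi_s$ denote reduction modulo $p^s$. A vector $I(z)\in\mathbb Z[z]^n$ is a solution of the KZ system modulo $p^s$ if $\pi_s I\in(\mathbb Z/p^s\mathbb Z)[z]^n$ satisfies the KZ system (the differential equations being understood in $(\mathbb Z/p^s\mathbb Z)[z]$ after multiplying the $i$-th equation by $\prod_{j\ne i}(z_i-z_j)$). For $\vec M=(M_1,\dots,M_n)$ put $\Phi(x,z,\vec M)=\prod_{i=1}^n(x-z_i)^{M_i}$, expand $\Big(\frac{\Phi(x,z,\vec M)}{x-z_1},\dots,\frac{\Phi(x,z,\vec M)}{x-z_n}\Big)=\sum_i P^i(z,\vec M)x^i$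 with $P^i(z,\vec M)\in\mathbb Z[z]^n$, and set $I^{[m-1]}(z,\vec M)=P^{m-1}(z,\vec M)$ for positive integers $m$. *)

From HB Require Import structures.
From mathcomp Require Import all_boot all_order all_algebra.
From mathcomp Require Import mpoly.
Set Implicit Arguments. Unset Strict Implicit. Unset Printing Implicit Defensive.
Import Order.TTheory GRing.Theory Num.Theory.
Local Open Scope ring_scope.

Definition Omega (n : nat) (i j : 'I_n) : 'M[int]_n :=
  \matrix_(k < n, l < n)
    (if ((k == i) && (l == i)) || ((k == j) && (l == j)) then -1
     else if ((k == i) && (l == j)) || ((k == j) && (l == i)) then 1
     else 0).

Definition Phi (n : nat) (M : 'I_n -> nat) : {poly {mpoly int[n]}} :=
  \prod_(k < n) ('X - ('X_k)%:P) ^+ M k.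

(* Phi(x,z,M)/(x - z_j), written out (valid since M_j >= 1). *)
Definition Phi_over (n : nat) (M : 'I_n -> nat) (j : 'I_n) :
    {poly {mpoly int[n]}} :=
  ('X - ('X_j)%:P) ^+ (M j).-1 * \prod_(k < n | k != j) ('X - ('X_k)%:P) ^+ M k.

(* I^{[k]}(z,M) = P^k(z,M): j-th component is the coefficient of x^k in
   Phi/(x - z_j). *)
Definition Ivec (n : nat) (k : nat) (M : 'I_n -> nat) : 'I_n -> {mpoly int[n]} :=
  fun j => (Phi_over M j)`_k.

Definition red_mod (q n : nat) (P : {mpoly int[n]}) : {mpoly 'Z_q[n]} :=
  map_mpoly (fun c : int => (c%:~R : 'Z_q)) P.

(* I is a solution of the KZ system modulo q: pi_q I satisfies
   I_1 + ... + I_n = 0 and, for every i, the i-th equation multiplied by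
   prod_{j<>i} (z_i - z_j), in (Z/qZ)[z]. *)
Definition KZ_solution_mod (q n : nat) (I : 'I_n -> {mpoly int[n]}) : Prop :=
  let J := fun k => red_mod q (I k) in
  (\sum_(k < n) J k = 0) /\
  forall i k : 'I_n,
    (\prod_(j < n | j != i) ('X_i - 'X_j)) * mderiv i (J k) =
    ((2%:R : 'Z_q)^-1) *:
      \sum_(j < n | j != i)
        (\prod_(l < n | (l != i) && (l != j)) ('X_i - 'X_l)) *
        \sum_(m < n) (((Omega i j k m)%:~R : 'Z_q) *: J m).

(* Write L_k = x - z_k and, for an exponent vector e, Pi e = prod_k L_k^(e_k)
   in R[z][x]; let e - d_j denote e with its j-th entry lowered by one.  The
   j-th component of I^[N](z,M) is the x^N-coefficient J_j of Pi (M - d_j).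
   Everything follows from two derivative formulas, both instances of the
   Leibniz rule for a product of powers:
       d/dz_i Pi e = - e_i Pi (e - d_i),     d/dx Pi e = sum_j e_j Pi (e - d_j).
   Over R = Z/p^t the hypotheses give 2 M_k + 1 = 0 and N + 1 = 0 for
   N = l p^t - 1, and 2 is invertible; hence M_k acts as -1/2 and the
   x^N-coefficient of any x-derivative vanishes, since it is (N+1) times a
   coefficient.  The sum equation then is the x^N-coefficient of -2 d/dx Pi M;
   the i-th equation for k <> i reduces to a single term of the Omega sum,
   and for k = i it is the x^N-coefficient of d/dx Pi (M - d_i).
   Finally, reduction modulo p^t commutes with the construction of I^[N], so
   the theorem is the specialization of these identities to R = 'Z_(p^t). *)

From HB Require Import structures.
From mathcomp Require Import all_boot all_order all_algebra.
From mathcomp Require Import mpoly.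
From mathcomp Require Import ring.
Set Implicit Arguments. Unset Strict Implicit. Unset Printing Implicit Defensive.
Import GRing.Theory.
Local Open Scope ring_scope.

Section Derivation.
Variables (T : comNzRingType) (d : T -> T).
Hypothesis derivM : forall x y, d (x * y) = d x * y + x * d y.

Lemma derivation1 : d 1 = 0.
Proof.
have := derivM 1 1; rewrite !mul1r mulr1.
by rewrite -{1}[d 1]addr0 => /addrI /esym.
Qed.

Lemma derivation_exp x m : d (x ^+ m) = (x ^+ m.-1 * d x) *+ m.
Proof.
elim: m => [|m IHm]; first by rewrite expr0 derivation1.
case: m IHm => [|m] IHm; first by rewrite expr1 expr0 mul1r.
by rewrite exprS derivM IHm mulrnAr mulrA -exprS (mulrC (d x)) -mulrS.
Qed.

Lemma derivation_prod (I : eqType) (s : seq I) (f : I -> T) : uniq s ->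
  d (\prod_(k <- s) f k) = \sum_(j <- s) d (f j) * \prod_(k <- s | k != j) f k.
Proof.
elim: s => [|x s IHs]; first by rewrite !big_nil derivation1.
rewrite /= => /andP [x_notin_s uniq_s].
rewrite !big_cons derivM IHs // eqxx /=; congr (_ + _).
  congr (_ * _); symmetry; apply: big_rmcond_in => k ks.
  by rewrite negbK => /eqP kx; rewrite -kx ks in x_notin_s.
rewrite mulr_sumr; apply: eq_big_seq => j js; rewrite big_cons.
have -> : x != j by apply: contraNneq x_notin_s => ->.
by rewrite mulrCA.
Qed.

End Derivation.

Lemma mulrn_char0 (R : pzRingType) (V : lmodType R) m :
  m%:R = 0 :> R -> forall v : V, v *+ m = 0.
Proof. by move=> m0 v; rewrite -scaler_nat m0 scale0r. Qed.

Lemma oppr_mulrn_odd (V : zmodType) (y : V) m :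
  y *+ (2 * m + 1) = 0 -> - (y *+ (2 * m)) = y.
Proof. by rewrite mulrnDr mulr1n => /eqP; rewrite addr_eq0 => /eqP ->; rewrite opprK. Qed.

Lemma Omega_combination (R : pzRingType) (W : lmodType R) n (i j k : 'I_n)
    (V : 'I_n -> W) : j != i ->
  \sum_(m < n) ((Omega i j k m)%:~R : R) *: V m =
  if k == i then V j - V i else if k == j then V i - V j else 0.
Proof.
move=> ji.
have pick c : \sum_(m < n) ((m == c)%:R : R) *: V m = V c.
  rewrite (bigD1 c) //= eqxx scale1r big1 ?addr0 // => m /negbTE ->.
  by rewrite scale0r.
have OmegaE m : (Omega i j k m)%:~R =
    if k == i then (m == j)%:R - (m == i)%:R
    else if k == j then (m == i)%:R - (m == j)%:R else 0 :> R.
  rewrite /Omega mxE.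
  case: (eqVneq k i) => [ki|ki]; case: (eqVneq k j) => [kj|kj];
  case: (eqVneq m i) => [mi|mi]; case: (eqVneq m j) => [mj|mj] => //=;
  try (subst; by rewrite eqxx in ji); by rewrite ?sub0r ?subr0 ?oppr0 ?mulr0z.
under eq_bigr => m _ do rewrite OmegaE.
case: ifP => _; last case: ifP => _; last by rewrite big1 // => m _; rewrite scale0r.
  all: by rewrite -!pick -sumrB; apply: eq_bigr => m _; rewrite scalerBl.
Qed.

Section ProductsOfLinearForms.
Variables (R : comNzRingType) (n : nat).
Local Notation A := {mpoly R[n]}.

Definition lin (k : 'I_n) : {poly A} := 'X - ('X_k)%:P.

Definition prodlin (e : 'I_n -> nat) : {poly A} := \prod_(k < n) lin k ^+ e k.

Definition lower (e : 'I_n -> nat) (j : 'I_n) : 'I_n -> nat :=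
  fun k => (e k - (k == j))%N.

Definition zderiv (i : 'I_n) : {poly A} -> {poly A} := map_poly (mderiv i).

Lemma prodlin_ext e e' : e =1 e' -> prodlin e = prodlin e'.
Proof. by move=> ee'; apply: eq_bigr => k _; rewrite ee'. Qed.

Lemma lowerC e i j : prodlin (lower (lower e i) j) = prodlin (lower (lower e j) i).
Proof. by apply: prodlin_ext => k; rewrite /lower subnAC. Qed.

Lemma lower_neq e i j : j != i -> lower e i j = e j.
Proof. by move=> ji; rewrite /lower (negbTE ji) subn0. Qed.

Lemma lower_eq e i : lower e i i = (e i - 1)%N.
Proof. by rewrite /lower eqxx. Qed.

Lemma prodlin_lower e j : (0 < e j)%N -> lin j * prodlin (lower e j) = prodlin e.
Proof.
move=> ej; rewrite /prodlin (bigD1 j) //= [RHS](bigD1 j) //= lower_eq subn1.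
rewrite mulrA -exprS prednK //; congr (_ * _).
by apply: eq_bigr => k /negbTE kj; rewrite /lower kj subn0.
Qed.

Lemma derivation_prodlin (d : {poly A} -> {poly A})
    (derivM : forall x y, d (x * y) = d x * y + x * d y) e :
  d (prodlin e) = \sum_j (d (lin j) * prodlin (lower e j)) *+ e j.
Proof.
rewrite /prodlin derivation_prod ?index_enum_uniq //; apply: eq_bigr => j _.
rewrite derivation_exp // (bigD1 j (P := predT)) //= lower_eq subn1.
have -> : \prod_(k < n | k != j) lin k ^+ lower e j k =
          \prod_(k < n | k != j) lin k ^+ e k.
  by apply: eq_bigr => k /negbTE kj; rewrite /lower kj subn0.
by rewrite !mulrnAl -mulrA [in RHS]mulrCA.
Qed.

Lemma zderivM i x y : zderiv i (x * y) = zderiv i x * y + x * zderiv i y.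
Proof.
apply/polyP => m; rewrite coefD /zderiv coef_map /= !coefM raddf_sum -big_split /=.
by apply: eq_bigr => j _; rewrite mderivM !coef_map.
Qed.

Lemma mderiv_var i k : mderiv i ('X_k : A) = (k == i)%:R.
Proof.
rewrite mderivX mnm1E; case: eqP => [->|_]; last by rewrite scale0r.
have -> : (U_(i) - U_(i))%MM = 0%MM by apply/mnmP => l; rewrite mnmBE mnm0E subnn.
by rewrite mpolyX0 scale1r.
Qed.

Lemma zderiv_lin i k : zderiv i (lin k) = - ((k == i)%:R)%:P.
Proof.
apply/polyP => m; rewrite /zderiv coef_map /= /lin !coefB coefX !coefC coefN coefC.
case: m => [|[|m]] /=.
- by rewrite mderivB mderiv_var mderiv0 sub0r.
- by rewrite mderivB mderiv0 subr0 -mpolyC1 mderivC oppr0.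
- by rewrite mderivB !mderiv0 subr0 oppr0.
Qed.

Lemma zderiv_prodlin i e : zderiv i (prodlin e) = - (prodlin (lower e i) *+ e i).
Proof.
rewrite (derivation_prodlin (zderivM i)) (bigD1 i) //= big1 ?addr0; last first.
  by move=> j /negbTE ji; rewrite zderiv_lin ji polyC0 oppr0 mul0r mul0rn.
by rewrite zderiv_lin eqxx polyC1 mulN1r mulNrn.
Qed.

Lemma deriv_prodlin e : deriv (prodlin e) = \sum_j prodlin (lower e j) *+ e j.
Proof.
rewrite (derivation_prodlin (@derivM _)).
by apply: eq_bigr => j _; rewrite /lin derivXsubC mul1r.
Qed.

End ProductsOfLinearForms.

Section KZIdentities.
Variables (R : comUnitRingType) (n : nat) (a : 'I_n -> nat) (N : nat).
Hypothesis a_pos : forall k, (0 < a k)%N.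
Hypothesis two_a_odd : forall k, (2 * a k + 1)%:R = 0 :> R.
Hypothesis N_succ : N.+1%:R = 0 :> R.
Hypothesis two_unit : (2%:R : R) \is a GRing.unit.
Local Notation A := {mpoly R[n]}.
Local Notation prodlin := (@prodlin R n).
Local Notation lin := (@lin R n).

Definition Jcomp (k : 'I_n) : A := (prodlin (lower a k))`_N.
Definition Hcomp (i j : 'I_n) : A := (prodlin (lower (lower a i) j))`_N.

Definition Pz (i : 'I_n) : A := \prod_(j < n | j != i) ('X_i - 'X_j).
Definition Qz (i j : 'I_n) : A := \prod_(l < n | (l != i) && (l != j)) ('X_i - 'X_l).

Lemma Pz_split i j : j != i -> Pz i = ('X_i - 'X_j) * Qz i j.
Proof. by move=> ji; rewrite /Pz (bigD1 j). Qed.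

Lemma mulrn_poly_char0 m : m%:R = 0 :> R -> forall f : {poly A}, f *+ m = 0.
Proof. by move=> m0 f; apply: mulrn_char0; apply: mulrn_char0. Qed.

Lemma a_half (y : A) k : 2%:R^-1 *: y = - (y *+ a k).
Proof.
have y_odd : - (y *+ (2 * a k)) = y.
  by apply: oppr_mulrn_odd; rewrite mulrn_char0.
rewrite -{1}y_odd mulnC mulrnA -mulNrn -scalerMnr scalerMnl -mulr_natr.
by rewrite mulVr // scale1r.
Qed.

(* The x^N-coefficient of an x-derivative is (N+1) times a coefficient. *)
Lemma coef_deriv_N (f : {poly A}) : (deriv f)`_N = 0.
Proof. by rewrite coef_deriv mulrn_char0. Qed.

(* J_i - J_j = (z_i - z_j) H_ij, from Pi (a - d_j) - Pi (a - d_i) =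
   (L_i - L_j) Pi (a - d_i - d_j). *)
Lemma Jcomp_sub i j : j != i -> Jcomp i - Jcomp j = ('X_i - 'X_j) * Hcomp i j.
Proof.
move=> ji.
have Fi : prodlin (lower a i) = lin j * prodlin (lower (lower a i) j).
  by rewrite prodlin_lower // lower_neq.
have Fj : prodlin (lower a j) = lin i * prodlin (lower (lower a i) j).
  by rewrite lowerC prodlin_lower // lower_neq // eq_sym.
have Lsub : lin j - lin i = (('X_i : A) - 'X_j)%:P by rewrite /lin polyCB; ring.
by rewrite /Jcomp -coefB Fi Fj -mulrBl Lsub coefCM.
Qed.

Lemma mderiv_Jcomp i k : mderiv i (Jcomp k) = - (Hcomp k i *+ lower a k i).
Proof.
by rewrite /Jcomp -(coef_map (mderiv i)) -/(zderiv i _) zderiv_prodlin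
  coefN coefMn.
Qed.

(* Sum equation: sum_k Pi (a - d_k) = -2 d/dx Pi a, whose x^N-coefficient is 0. *)
Lemma KZ_sum : \sum_(k < n) Jcomp k = 0.
Proof.
have sum_lower : \sum_(k < n) prodlin (lower a k) = - (deriv (prodlin a) *+ 2).
  rewrite deriv_prodlin -sumrMnl -sumrN; apply: eq_bigr => k _.
  by rewrite -mulrnA mulnC oppr_mulrn_odd // mulrn_poly_char0.
by rewrite /Jcomp -coef_sum sum_lower coefN coefMn coef_deriv_N mul0rn oppr0.
Qed.

(* The x^N-coefficient of d/dx Pi (a - d_i) gives
   -(a_i - 1) H_ii = sum_(j <> i) a_j H_ij. *)
Lemma Hcomp_diag i :
  - (Hcomp i i *+ (a i - 1)) = \sum_(j < n | j != i) Hcomp i j *+ a j.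
Proof.
have := coef_deriv_N (prodlin (lower a i)).
rewrite deriv_prodlin coef_sum (bigD1 i) //= => /eqP.
rewrite addr_eq0 coefMn lower_eq => /eqP ->; rewrite opprK.
by apply: eq_bigr => j ji; rewrite coefMn lower_neq.
Qed.

(* i-th equation, k <> i: only the term j = k of the Omega sum survives. *)
Lemma KZ_offdiag i k : k != i ->
  Pz i * mderiv i (Jcomp k) = 2%:R^-1 *:
    \sum_(j < n | j != i) Qz i j * \sum_(m < n) ((Omega i j k m)%:~R *: Jcomp m).
Proof.
move=> ki.
under eq_bigr => j ji do rewrite (Omega_combination _ _ ji) (negbTE ki).
rewrite (bigD1 k) //= eqxx big1 ?addr0; last first.
  by move=> j /andP [_ jk]; rewrite eq_sym (negbTE jk) mulr0.
rewrite (Pz_split ki) (a_half _ i) mderiv_Jcomp /Hcomp lowerC -/(Hcomp i k).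
rewrite (Jcomp_sub ki) lower_neq 1?eq_sym //.
by rewrite mulrN mulrnAr [in RHS]mulrCA mulrA.
Qed.

Lemma KZ_diag i :
  Pz i * mderiv i (Jcomp i) = 2%:R^-1 *:
    \sum_(j < n | j != i) Qz i j * \sum_(m < n) ((Omega i j i m)%:~R *: Jcomp m).
Proof.
under eq_bigr => j ji do rewrite (Omega_combination _ _ ji) eqxx.
rewrite mderiv_Jcomp lower_eq Hcomp_diag mulr_sumr scaler_sumr.
apply: eq_bigr => j ji.
rewrite (a_half _ j) -opprB (Jcomp_sub ji) mulrN mulrCA mulrA -(Pz_split ji).
by rewrite mulNrn opprK mulrnAr.
Qed.

End KZIdentities.

Lemma red_Ivec (q n N : nat) (M : 'I_n -> nat) k :
  red_mod q (Ivec N M k) = @Jcomp 'Z_q n M N k.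
Proof.
rewrite /red_mod /Ivec /Jcomp -(coef_map (map_mpoly (fun c : int => c%:~R))).
apply: (congr1 (fun f : {poly {mpoly 'Z_q[n]}} => f`_N)).
rewrite /Phi_over rmorphM rmorphXn rmorph_prod /= map_polyXsubC /= map_mpolyX.
rewrite /prodlin [RHS](bigD1 k) //= lower_eq subn1; congr (_ * _).
apply: eq_bigr => j jk; rewrite lower_neq // rmorphXn /= map_polyXsubC /=.
by rewrite map_mpolyX.
Qed.

Theorem theorem5p1 (p g n s : nat) (M : 'I_n -> nat) :
  prime p -> odd p -> (1 <= g)%N -> n = (2 * g + 1)%N -> (n < p)%N ->
  (1 <= s)%N ->
  (forall i, 0 < M i)%N ->
  (forall i, p ^ s %| 2 * M i + 1)%N ->
  forall l t : nat, (0 < l)%N -> (0 < t)%N -> (t <= s)%N ->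
    KZ_solution_mod (p ^ t) (Ivec (l * p ^ t - 1) M).
Proof.
move=> p_prime p_odd _ _ _ _ M_pos M_div l t l_pos t_pos t_le_s.
have q_gt1 : (1 < p ^ t)%N.
  by rewrite -(expn0 p) ltn_exp2l ?prime_gt1.
have q0 : (p ^ t)%:R = 0 :> 'Z_(p ^ t) by exact: pchar_Zp.
have two_M_odd k : (2 * M k + 1)%:R = 0 :> 'Z_(p ^ t).
  have /dvdnP [c ->] := dvdn_trans (dvdn_exp2l p t_le_s) (M_div k).
  by rewrite natrM q0 mulr0.
have N_succ : (l * p ^ t - 1).+1%:R = 0 :> 'Z_(p ^ t).
  by rewrite subn1 prednK ?muln_gt0 ?l_pos ?expn_gt0 ?prime_gt0 // natrM q0 mulr0.
have two_unit : (2%:R : 'Z_(p ^ t)) \is a GRing.unit.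
  by rewrite unitZpE // coprimen2 oddX p_odd orbT.
split=> [|i k].
  under eq_bigr => k _ do rewrite red_Ivec.
  exact: KZ_sum.
rewrite red_Ivec.
under [in RHS]eq_bigr => j _ do under [X in _ * X]eq_bigr => m _ do rewrite red_Ivec.
case: (eqVneq k i) => [->|ki]; first exact: KZ_diag.
exact: KZ_offdiag.
Qed.
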